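(* In the setting below, assume $\|\nabla f_i(x)\|\le G_i$ for all $x$ and $i$. For arbitrary permutations $\sigma_k$ and any $\eta>0$, there is an absolute constant $C>0$ such that: (i) with $\eta_k=\frac{\eta}{\sqrt k}$ for $k\in[K]$, $F(x_{K+1})-F_*\le C\left(\frac{D^2}{n\eta}+n\eta\bar G^2(1+\log K)\right)\frac1{\sqrt K}$; (ii) with $\eta_k=\frac{\eta}{\sqrt K}$ for $k\in[K]$, $F(x_{K+1})-F_*\le C\left(\frac{D^2}{n\eta}+n\eta\bar G^2(1+\log K)\right)\frac1{\sqrt K}$; (iii) with $\eta_k=\eta\frac{K-k+1}{K^{3/2}}$ for $k\in[K]$, $F(x_{K+1})-F_*\le C\left(\frac{D^2}{n\eta}+n\eta\bar G^2\right)\frac1{\sqrt K}$. In particular, with $\eta=\frac{D}{n\bar G}$ in (iii), $F(x_{K+1})-F_*\le 2C\frac{\bar GD}{\sqrt K}$.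
   Context: Setting. Let $n,d\in\mathbb N$, let $f_1,\dots,f_n:\mathbb R^d\to\mathbb R$ be convex, $f=\frac1n\sum_{i=1}^nf_i$, let $\psi:\mathbb R^d\to\mathbb R\cup\{+\infty\}$ be proper, closed and convex, and $F=f+\psi$. For a convex function $g$, $\nabla g(x)$ denotes an element of $\partial g(x)$ (for each $f_i$ a fixed selection of subgradients, the same one used in the algorithm). Assume there is $x_*\in\mathbb R^d$ with $F(x_* )=\inf_{x}F(x)\in\mathbb R$; write $F_*=F(x_* )$. Proximal shuffling gradient method: given $x_1\in\mathrm{dom}\,\psi$, a number of epochs $K\ge2$ and stepsizes $\eta_k>0$, for $k=1,\dots,K$: choose a permutation $\sigma_k=(\sigma_k^1,\dots,\sigma_k^n)$ of $[n]=\{1,\dots,n\}$; set $x_k^1=x_k$ and $x_k^{i+1}=x_k^i-\eta_k\nabla f_{\sigma_k^i}(x_k^i)$ for $i=1,\dots,n$; set $x_{k+1}=\arg\min_{x\in\mathbb R^d}\{n\psi(x)+\frac{1}{2\eta_k}\|x-x_k^{n+1}\|^2\}$. $D=\|x_*-x_1\|$; $\|\cdot\|$ is the Euclidean norm; $\log$ is natural. Lipschitz condition: constants $G_i>0$ with $\|\nabla f_i(x)\|\le G_i$ for all $x\in\mathbb R^d$, $i\in[n]$ (for every subgradient); $\bar G=\frac1n\sum_{i=1}^nG_i$. *)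

From HB Require Import structures.
From mathcomp Require Import all_boot all_order all_algebra all_fingroup.
From mathcomp Require Import all_classical all_reals all_analysis.
From mathcomp Require Import Rstruct Rstruct_topology.
Set Implicit Arguments. Unset Strict Implicit. Unset Printing Implicit Defensive.
Import Order.TTheory GRing.Theory Num.Theory.
Local Open Scope classical_set_scope.
Local Open Scope ring_scope.

Notation RR := Rdefinitions.R.

Notation vec d := 'rV[RR]_d.

Definition dot {d : nat} (u v : vec d) : RR := \sum_(i < d) u 0 i * v 0 i.
Definition enorm {d : nat} (v : vec d) : RR := Num.sqrt (dot v v).

Definition convex_fun {d : nat} (h : vec d -> RR) : Prop :=
  forall (x y : vec d) (t : RR), 0 <= t <= 1 ->
    h (t *: x + (1 - t) *: y) <= t * h x + (1 - t) * h y.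

Definition subgrad {d : nat} (h : vec d -> RR) (x v : vec d) : Prop :=
  forall y : vec d, h x + dot v (y - x) <= h y.

Definition proper_ext {d : nat} (psi : vec d -> \bar RR) : Prop :=
  (forall x, (-oo < psi x)%E) /\ (exists x, (psi x < +oo)%E).

Definition convex_ext {d : nat} (psi : vec d -> \bar RR) : Prop :=
  forall (x y : vec d) (t : RR), 0 <= t <= 1 ->
    (psi (t *: x + (1 - t) *: y)%R <= t%:E * psi x + (1 - t)%:E * psi y)%E.

(* closed = the epigraph is closed (sequential form, Euclidean topology) *)
Definition closed_ext {d : nat} (psi : vec d -> \bar RR) : Prop :=
  forall (u : nat -> vec d) (a : nat -> RR) (z : vec d) (b : RR),
    (forall k, (psi (u k) <= (a k)%:E)%E) ->
    (fun k => enorm (u k - z)) @ \oo --> (0 : RR) ->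
    a @ \oo --> b ->
    (psi z <= b%:E)%E.

Definition inner_pass {n d : nat} (g : 'I_n -> vec d -> vec d) (eta : RR)
  (s : {perm 'I_n}) (x : vec d) : vec d :=
  foldl (fun y i => y - eta *: g (s i) y) x (enum 'I_n).

Definition is_prox {d : nat} (n : nat) (psi : vec d -> \bar RR) (eta : RR)
  (y z : vec d) : Prop :=
  forall w : vec d,
    ((n%:R)%:E * psi z + (enorm (z - y)%R ^+ 2 / (2 * eta))%:E
      <= (n%:R)%:E * psi w + (enorm (w - y)%R ^+ 2 / (2 * eta))%:E)%E.

(* x : nat -> vec d is the sequence of epoch iterates x_1, ..., x_{K+1} of the
   proximal shuffling gradient method with stepsizes eta_k and permutations
   sigma_k (indices k start at 1). *)
Definition prox_shuffling_run {n d : nat} (g : 'I_n -> vec d -> vec d)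
  (psi : vec d -> \bar RR) (K : nat) (eta : nat -> RR)
  (sigma : nat -> {perm 'I_n}) (x1 : vec d) (x : nat -> vec d) : Prop :=
  x 1%N = x1 /\
  forall k : nat, (1 <= k <= K)%N ->
    is_prox n psi (eta k) (inner_pass g (eta k) (sigma k) (x k)) (x k.+1).

Definition favg {n d : nat} (f : 'I_n -> vec d -> RR) (x : vec d) : RR :=
  (n%:R)^-1 * \sum_(i < n) f i x.

Definition Fobj {n d : nat} (f : 'I_n -> vec d -> RR)
  (psi : vec d -> \bar RR) (x : vec d) : \bar RR :=
  ((favg f x)%:E + psi x)%E.

From HB Require Import structures.
From mathcomp Require Import all_boot all_order all_algebra all_fingroup.
From mathcomp Require Import all_classical all_reals all_analysis.
From mathcomp Require Import Rstruct Rstruct_topology.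
From mathcomp Require Import ring lra.
Import Order.TTheory GRing.Theory Num.Theory.
Set Implicit Arguments. Unset Strict Implicit.
Local Open Scope ring_scope.

(* An epoch moves the iterate by at most eta_k * sum_i G_i, so the subgradient
   inequalities of the f_i taken along the epoch transfer to its starting point;
   with the three-point property of the prox this makes every epoch one step of
   a proximal subgradient method for F with stepsize gamma_k = n eta_k, up to an
   error 2 Gbar^2 gamma_k^2:
     gamma_k (F(x_{k+1}) - F(z)) <= (|x_k - z|^2 - |x_{k+1} - z|^2) / 2 + 2 Gbar^2 gamma_k^2
   for every z in dom psi.  Comparing x_{k+1} with the convex combinations
     z_k = (gamma_k / S_k) x_{k+1} + (S_{k+1} / S_k) z_{k-1},   z_0 = x_*,
   of past iterates, where S_k = gamma_k + ... + gamma_K, the potential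
   |x_k - z_{k-1}|^2 / (2 S_k) + F(z_{k-1}) - F_* increases by at most
   2 Gbar^2 gamma_k^2 / S_k per epoch, which yields the last-iterate bound
     F(x_{K+1}) - F_* <= D^2 / (2 S_1) + 2 Gbar^2 sum_k gamma_k^2 / S_k.
   For the three schedules S_k is bounded below by an explicit multiple of
   (K - k + 1) / sqrt K (resp. (K - k + 1)^2 / K^{3/2}), and the sum is at most
   a harmonic sum, hence O(log K), for (i) and (ii), and O(1) for (iii). *)

Section EuclideanGeometry.
Variable d : nat.
Implicit Types u v w : vec d.

Lemma dotC u v : dot u v = dot v u.
Proof. by apply: eq_bigr => i _; rewrite mulrC. Qed.

Lemma dotDl u v w : dot (u + v) w = dot u w + dot v w.
Proof. by rewrite /dot -big_split; apply: eq_bigr => i _; rewrite !mxE mulrDl. Qed.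

Lemma dotZl (a : RR) u v : dot (a *: u) v = a * dot u v.
Proof. by rewrite /dot mulr_sumr; apply: eq_bigr => i _; rewrite !mxE mulrA. Qed.

Lemma dotNl u v : dot (- u) v = - dot u v.
Proof. by rewrite -scaleN1r dotZl mulN1r. Qed.

Lemma dotBl u v w : dot (u - v) w = dot u w - dot v w.
Proof. by rewrite dotDl dotNl. Qed.

Lemma dotDr u v w : dot w (u + v) = dot w u + dot w v.
Proof. by rewrite dotC dotDl !(dotC w). Qed.

Lemma dotZr (a : RR) u v : dot v (a *: u) = a * dot v u.
Proof. by rewrite dotC dotZl dotC. Qed.

Lemma dotNr u v : dot v (- u) = - dot v u.
Proof. by rewrite dotC dotNl dotC. Qed.

Lemma dotBr u v w : dot w (u - v) = dot w u - dot w v.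
Proof. by rewrite dotDr dotNr. Qed.

Lemma dotNN u : dot (- u) (- u) = dot u u.
Proof. by rewrite dotNl dotNr opprK. Qed.

Lemma dotZZ (a : RR) u : dot (a *: u) (a *: u) = a ^+ 2 * dot u u.
Proof. by rewrite dotZl dotZr mulrA expr2. Qed.

Lemma dotDD u v : dot (u + v) (u + v) = dot u u + 2 * dot u v + dot v v.
Proof. by rewrite dotDl !dotDr (dotC v u); ring. Qed.

Lemma dotvv_ge0 u : 0 <= dot u u.
Proof. by rewrite sumr_ge0 // => i _; rewrite -expr2 sqr_ge0. Qed.

Lemma dotvv_eq0 u : dot u u = 0 -> u = 0.
Proof.
move=> /eqP; rewrite psumr_eq0 => [/allP u0|i _]; last by rewrite -expr2 sqr_ge0.
apply/matrixP => i j; rewrite !mxE (ord1 i).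
by have /implyP/(_ isT) := u0 j (mem_index_enum j); rewrite mulf_eq0 orbb => /eqP.
Qed.

Lemma enorm_ge0 u : 0 <= enorm u.
Proof. exact: sqrtr_ge0. Qed.

Lemma enorm_sqr u : enorm u ^+ 2 = dot u u.
Proof. by rewrite sqr_sqrtr // dotvv_ge0. Qed.

Lemma enormN u : enorm (- u) = enorm u.
Proof. by rewrite /enorm dotNN. Qed.

Lemma enormBC u v : enorm (u - v) = enorm (v - u).
Proof. by rewrite -enormN opprB. Qed.

Lemma enormZ (a : RR) u : enorm (a *: u) = `|a| * enorm u.
Proof. by rewrite /enorm dotZZ sqrtrM ?sqr_ge0 // sqrtr_sqr. Qed.

Lemma dot_le_enorm u v : dot u v <= enorm u * enorm v.
Proof.
have [v0|v_neq0] := eqVneq (dot v v) 0.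
  by rewrite (dotvv_eq0 v0) /dot big1 ?mulr_ge0 ?enorm_ge0 // => i _; rewrite mxE mulr0.
have vv_gt0 : 0 < dot v v by rewrite lt0r v_neq0 dotvv_ge0.
have sqr_le : dot u v ^+ 2 <= dot u u * dot v v.
  have := dotvv_ge0 (u - (dot u v / dot v v) *: v).
  rewrite dotBl !dotBr !dotZl !dotZr (dotC v u).
  have -> : dot u u - dot u v / dot v v * dot u v -
     (dot u v / dot v v * dot u v - dot u v / dot v v * (dot u v / dot v v * dot v v))
     = (dot u u * dot v v - dot u v ^+ 2) / dot v v by field; rewrite v_neq0.
  by rewrite pmulr_lge0 ?invr_gt0 // subr_ge0.
rewrite /enorm -sqrtrM ?dotvv_ge0 //; apply: (le_trans (ler_norm _)).
by rewrite -sqrtr_sqr ler_wsqrtr.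
Qed.

Lemma Ndot_le_enorm u v : - dot u v <= enorm u * enorm v.
Proof. by rewrite -dotNr -(enormN v) dot_le_enorm. Qed.

Lemma enormD u v : enorm (u + v) <= enorm u + enorm v.
Proof.
have sqr_le : dot (u + v) (u + v) <= (enorm u + enorm v) ^+ 2.
  by rewrite dotDD sqrrD !enorm_sqr; have := dot_le_enorm u v; lra.
apply: (le_trans (ler_wsqrtr sqr_le)).
by rewrite sqrtr_sqr ger0_norm // addr_ge0 ?enorm_ge0.
Qed.

End EuclideanGeometry.

Lemma le_EFin_real (e : \bar RR) (r : RR) :
  (-oo < e)%E -> (e <= r%:E)%E -> exists2 s, e = s%:E & s <= r.
Proof. by case: e => [s| |] //= _ sr; exists s; rewrite // -lee_fin. Qed.

Lemma ge0_of_forall_ge0_DrM (a b : RR) :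
  0 <= b -> (forall t, 0 < t <= 1 -> 0 <= a + t * b) -> 0 <= a.
Proof.
move=> b_ge0 abt; rewrite leNgt; apply/negP => a_lt0.
have [b0|b_neq0] := eqVneq b 0.
  by have := abt 1; rewrite b0 mulr0 addr0 ltr01 lexx => /(_ isT); lra.
have b_gt0 : 0 < b by rewrite lt0r b_neq0 b_ge0.
have [t_le1|t_gt1] := lerP (- a / (2 * b)) 1.
  have t_gt0 : 0 < - a / (2 * b) by rewrite divr_gt0 ?mulr_gt0 //; lra.
  have := abt (- a / (2 * b)); rewrite t_gt0 t_le1 => /(_ isT).
  have -> : a + - a / (2 * b) * b = a / 2 by field.
  lra.
have := abt 1; rewrite lexx ltr01 mul1r => /(_ isT).
by move: t_gt1; rewrite ltr_pdivlMr ?mulr_gt0 //; lra.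
Qed.

Section Prox.
Variables (d n : nat) (psi : vec d -> \bar RR) (eta : RR) (y x' : vec d).
Hypotheses (n_gt0 : (0 < n)%N) (psi_proper : proper_ext psi)
  (hprox : is_prox n psi eta y x').

Lemma is_prox_fin (z : vec d) (q : RR) : psi z = q%:E -> exists p, psi x' = p%:E.
Proof.
move=> psiz; have := hprox z; rewrite psiz.
have := psi_proper.1 x'; case: (psi x') => [p| |] //; first by exists p.
by rewrite mulry gtr0_sg ?ltr0n // mul1e addye.
Qed.

(* The prox objective is 1/(2 eta)-strongly convex, so its minimiser x' beats
   every z by the quadratic term |z - x'|^2 / (2 eta). *)
Lemma is_prox_three_point (z : vec d) (p q : RR) :
  0 < eta -> convex_ext psi -> psi x' = p%:E -> psi z = q%:E ->
  n%:R * p + dot (x' - y) (x' - y) / (2 * eta) + dot (z - x') (z - x') / (2 * eta)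
  <= n%:R * q + dot (z - y) (z - y) / (2 * eta).
Proof.
move=> eta_gt0 psi_cvx psix' psiz.
set k := (2 * eta)^-1; have k_gt0 : 0 < k by rewrite invr_gt0 mulr_gt0.
set c := dot (x' - y) (z - x'); set e := dot (z - x') (z - x').
have first_order : 0 <= n%:R * (q - p) + 2 * c * k.
  apply: (@ge0_of_forall_ge0_DrM _ (e * k)); first by rewrite mulr_ge0 ?dotvv_ge0 ?ltW.
  move=> t /andP [t_gt0 t_le1].
  have := psi_cvx z x' t; rewrite (ltW t_gt0) t_le1 => /(_ isT).
  rewrite psix' psiz -!EFinM -EFinD => psi_comb.
  have [s psis s_le] := le_EFin_real (psi_proper.1 _) psi_comb.
  have := hprox (t *: z + (1 - t) *: x'); rewrite psis psix' -!EFinM -!EFinD lee_fin.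
  have -> : t *: z + (1 - t) *: x' - y = (x' - y) + t *: (z - x').
    by apply/matrixP => i j; rewrite !mxE; ring.
  rewrite !enorm_sqr (dotDD (x' - y)) !dotZr -/c !dotZl -/e => prox_le.
  have ns_le : n%:R * s <= n%:R * (t * q + (1 - t) * p) by rewrite ler_wpM2l.
  have np_le : n%:R * p <= n%:R * (t * q + (1 - t) * p) + (2 * (t * c) + t * (t * e)) * k.
    by move: prox_le; rewrite /k !mulrDl; lra.
  suff : 0 <= t * (n%:R * (q - p) + 2 * c * k + t * (e * k)) by rewrite pmulr_rge0.
  by move: np_le; rewrite !mulrDl !mulrDr !mulrA; lra.
have -> : dot (z - y) (z - y) = e + 2 * c + dot (x' - y) (x' - y).
  have -> : z - y = (z - x') + (x' - y) by rewrite addrA subrK.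
  by rewrite (dotDD (z - x')) (dotC (z - x') (x' - y)).
by move: first_order; rewrite -/k !mulrDl; lra.
Qed.

End Prox.

Section Epoch.
Variables (d n : nat) (f : 'I_n -> vec d -> RR) (g : 'I_n -> vec d -> vec d)
  (G : 'I_n -> RR) (s : {perm 'I_n}) (eta : RR).
Hypotheses (g_subgrad : forall i x, subgrad (f i) x (g i x))
  (g_bounded : forall i x, enorm (g i x) <= G i)
  (G_ge0 : forall i, 0 <= G i) (eta_ge0 : 0 <= eta).

Let step (y : vec d) (i : 'I_n) := y - eta *: g (s i) y.

Lemma foldl_step_dist (l : seq 'I_n) (y : vec d) :
  enorm (y - foldl step y l) <= eta * \sum_(i <- l) G (s i).
Proof.
elim: l y => [|i l IH] y /=.
  rewrite big_nil subrr mulr0 /enorm /dot big1 ?sqrtr0 // => j _.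
  by rewrite mxE mulr0.
rewrite big_cons mulrDr.
have -> : y - foldl step (step y i) l
    = (y - step y i) + (step y i - foldl step (step y i) l) by rewrite addrA subrK.
apply: (le_trans (enormD _ _)); apply: lerD; last exact: IH.
by rewrite /step opprB addrC subrK enormZ ger0_norm // ler_wpM2l.
Qed.

(* Descent along a pass over l, measured against x' instead of the inner
   points: the displacement of the pass (foldl_step_dist) pays for the switch. *)
Lemma foldl_step_descent (x' z : vec d) (l : seq 'I_n) (y : vec d) :
  let E := foldl step y l in
  let S := \sum_(i <- l) G (s i) in
  dot (E - z) (E - z) <= dot (y - z) (y - z)
     - 2 * eta * \sum_(i <- l) (f (s i) x' - f (s i) z)
     + 2 * eta * S * enorm (E - x') + 3 * eta ^+ 2 * S ^+ 2.
Proof.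
elim: l y => [|i l IH] y /=.
  by rewrite !big_nil !mulr0 !mul0r subr0 expr0n /= mulr0 !addr0.
set y1 := step y i; set E := foldl step y1 l.
have {IH} := IH y1; rewrite /= -/E.
set S' := \sum_(j <- l) G (s j); set F1 := \sum_(j <- l) _.
rewrite !big_cons -/S' -/F1.
set a := enorm (E - x'); set gi := g (s i) y; set g' := g (s i) x'; set Gi := G (s i).
have Gi_ge0 : 0 <= Gi := G_ge0 (s i).
have S'_ge0 : 0 <= S' by rewrite sumr_ge0.
have a_ge0 : 0 <= a := enorm_ge0 _.
have dist_yE : enorm (y - E) <= eta * (Gi + S').
  by have := foldl_step_dist (i :: l) y; rewrite big_cons.
have -> : dot (y1 - z) (y1 - z) =
    dot (y - z) (y - z) - 2 * eta * dot gi (y - z) + eta ^+ 2 * dot gi gi.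
  have -> : y1 - z = (y - z) + (- eta) *: gi by rewrite /y1 /step addrAC scaleNr.
  by rewrite (dotDD (y - z)) dotZr dotZZ (dotC (y - z)) sqrrN; ring.
have sub_y : f (s i) y - dot gi (y - z) <= f (s i) z.
  by have := g_subgrad (s i) y z; rewrite -/gi -opprB dotNr.
have sub_x' : f (s i) x' + dot g' (y - E) + dot g' (E - x') <= f (s i) y.
  by have := g_subgrad (s i) x' y; rewrite -addrA -dotDr addrA subrK.
have yE_le : - dot g' (y - E) <= Gi * (eta * (Gi + S')).
  apply: (le_trans (Ndot_le_enorm _ _)); apply: ler_pM; rewrite ?enorm_ge0 //.
  exact: g_bounded.
have Ex'_le : - dot g' (E - x') <= Gi * a.
  by apply: (le_trans (Ndot_le_enorm _ _)); rewrite ler_wpM2r //; exact: g_bounded.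
have gi_le : dot gi gi <= Gi ^+ 2.
  by rewrite -enorm_sqr; apply: lerXn2r; rewrite ?nnegrE ?enorm_ge0 //; exact: g_bounded.
have lin : - dot gi (y - z) <= f (s i) z - f (s i) x' + Gi * (eta * (Gi + S')) + Gi * a.
  lra.
have := ler_wpM2l (mulr_ge0 (ler0n _ 2) eta_ge0) lin.
have := ler_wpM2l (sqr_ge0 eta) gi_le.
have : 0 <= eta ^+ 2 * Gi * S' by rewrite !mulr_ge0 ?sqr_ge0.
lra.
Qed.

End Epoch.

Lemma sum_perm_enum n (s : {perm 'I_n}) (F : 'I_n -> RR) :
  \sum_(i <- enum 'I_n) F (s i) = \sum_i F i.
Proof. by rewrite big_enum /= [RHS](reindex_inj (@perm_inj _ s)). Qed.

Lemma favg_sum n d (f : 'I_n -> vec d -> RR) (x : vec d) :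
  (0 < n)%N -> \sum_i f i x = n%:R * favg f x.
Proof. by move=> n_gt0; rewrite /favg mulrA divff ?mul1r // pnatr_eq0 -lt0n. Qed.

Lemma epoch_descent d n (f : 'I_n -> vec d -> RR) (g : 'I_n -> vec d -> vec d)
  (G : 'I_n -> RR) (psi : vec d -> \bar RR) (s : {perm 'I_n}) (eta : RR)
  (xk x' z : vec d) (p q : RR) :
  (0 < n)%N ->
  (forall i x, subgrad (f i) x (g i x)) ->
  (forall i x, enorm (g i x) <= G i) ->
  (forall i, 0 <= G i) ->
  convex_ext psi -> proper_ext psi -> 0 < eta ->
  is_prox n psi eta (inner_pass g eta s xk) x' ->
  psi x' = p%:E -> psi z = q%:E ->
  n%:R * eta * ((favg f x' + p) - (favg f z + q)) <=
  (dot (xk - z) (xk - z) - dot (x' - z) (x' - z)) / 2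
  + 2 * eta ^+ 2 * (\sum_i G i) ^+ 2.
Proof.
move=> n_gt0 g_subgrad g_bounded G_ge0 psi_cvx psi_proper eta_gt0 hprox psix' psiz.
set E := inner_pass g eta s xk.
have := foldl_step_descent s g_subgrad g_bounded G_ge0 (ltW eta_gt0) x' z (enum 'I_n) xk.
rewrite /= -/E sumrB (sum_perm_enum s (f^~ x')) (sum_perm_enum s (f^~ z)).
rewrite (sum_perm_enum s G) !favg_sum //.
set S := \sum_i G i; set a := enorm (E - x').
have := is_prox_three_point psi_proper hprox eta_gt0 psi_cvx psix' psiz.
rewrite -/E -(dotNN (x' - E)) -(dotNN (z - E)) -(dotNN (z - x')) !opprB -enorm_sqr -/a.
move=> /(ler_wpM2l (ltW (mulr_gt0 (ltr0Sn _ 1) eta_gt0))).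
have cancel X : 2 * eta * (X / (2 * eta)) = X by field; rewrite gt_eqF.
rewrite !mulrDr !cancel.
have : 2 * eta * S * a - a ^+ 2 <= eta ^+ 2 * S ^+ 2.
  by have := sqr_ge0 (eta * S - a); rewrite sqrrB; lra.
lra.
Qed.

Definition tail_sum (gm : nat -> RR) (K k : nat) : RR := \sum_(k <= j < K) gm j.

Definition last_iterate_rate (gm : nat -> RR) (K : nat) (D2 B : RR) : RR :=
  D2 / (2 * tail_sum gm K 0) + B * \sum_(k < K) (gm k ^+ 2 / tail_sum gm K k).

Lemma tail_sum_recl (gm : nat -> RR) (K k : nat) :
  (k < K)%N -> tail_sum gm K k = gm k + tail_sum gm K k.+1.
Proof. exact: big_ltn. Qed.

Lemma tail_sum_ge0 (gm : nat -> RR) (K k : nat) :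
  (forall j, (j < K)%N -> 0 <= gm j) -> 0 <= tail_sum gm K k.
Proof.
move=> gm_ge0; rewrite /tail_sum big_nat_cond sumr_ge0 // => j /andP[/andP[_ jK] _].
exact: gm_ge0.
Qed.

(* Read a, b, b' as |x_k - z|^2, |x_{k+1} - z|^2, |x_{k+1} - z'|^2 and
   P, P', D as F(z), F(z'), F(x_{k+1}) minus F_*, where z' = (g/S) x_{k+1} + (S'/S) z. *)
Lemma potential_step_real (g S S' a b b' P P' D B : RR) :
  0 < g -> S = g + S' -> 0 < S' -> b' <= (S' / S) ^+ 2 * b -> 0 <= b ->
  P' <= (S' / S) * P + (g / S) * D ->
  g * (D - P) <= (a - b) / 2 + B * g ^+ 2 ->
  b' / (2 * S') + P' <= a / (2 * S) + P + B * g ^+ 2 / S.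
Proof.
move=> g_gt0 eS S'_gt0 b'_le b_ge0 P'_le descent.
have S_gt0 : 0 < S by rewrite eS addr_gt0.
have dist_le : b' / (2 * S') <= b / (2 * S).
  rewrite ler_pdivrMr ?mulr_gt0 //; apply: (le_trans b'_le).
  have -> : (S' / S) ^+ 2 * b = (b / (2 * S)) * (2 * S') * (S' / S) by field; rewrite gt_eqF.
  apply: ler_piMr; last by rewrite ler_pdivrMr // mul1r eS lerDr ltW.
  by rewrite mulr_ge0 ?divr_ge0 ?mulr_ge0 // ltW.
have Sinv_ge0 : 0 <= S^-1 by rewrite invr_ge0 ltW.
have := ler_wpM2l Sinv_ge0 descent.
have -> : S^-1 * (g * (D - P)) = g / S * D - g / S * P by field; rewrite gt_eqF.
have -> : S^-1 * ((a - b) / 2 + B * g ^+ 2) = a / (2 * S) - b / (2 * S) + B * g ^+ 2 / S.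
  by field; rewrite gt_eqF.
have : S' / S * P + g / S * P = P by rewrite -mulrDl -mulrDl addrC -eS divff ?mul1r ?gt_eqF.
lra.
Qed.

(* Indices are shifted by one with respect to the method: x 0 is the starting
   point and gm k is the stepsize of the epoch producing x k.+1. *)
Section LastIterate.
Variables (d : nat) (F : vec d -> RR) (dom : vec d -> Prop) (x : nat -> vec d)
  (xs : vec d) (gm : nat -> RR) (K : nat) (B : RR).
Hypotheses (gm_gt0 : forall k, (k < K)%N -> 0 < gm k)
  (F_convex : forall u v t, dom u -> dom v -> 0 <= t <= 1 ->
     dom (t *: u + (1 - t) *: v) /\
     F (t *: u + (1 - t) *: v) <= t * F u + (1 - t) * F v)
  (dom_xs : dom xs) (dom_x : forall k, (k < K)%N -> dom (x k.+1))
  (descent : forall k z, (k < K)%N -> dom z ->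
     gm k * (F (x k.+1) - F z) <=
     (dot (x k - z) (x k - z) - dot (x k.+1 - z) (x k.+1 - z)) / 2 + B * gm k ^+ 2).

Let S := tail_sum gm K.

Let S_gt0 k : (k < K)%N -> 0 < S k.
Proof.
move=> kK; have := gm_gt0 kK; rewrite /S tail_sum_recl //.
have : 0 <= tail_sum gm K k.+1 by apply: tail_sum_ge0 => j jK; exact/ltW/gm_gt0.
lra.
Qed.

Let theta k := gm k / S k.

Let theta_ge0_le1 k : (k < K)%N -> 0 <= theta k <= 1.
Proof.
move=> kK; rewrite /theta divr_ge0 ?(ltW (gm_gt0 kK)) ?(ltW (S_gt0 kK)) //=.
rewrite ler_pdivrMr ?S_gt0 // mul1r.
rewrite /S tail_sum_recl // lerDl; apply: tail_sum_ge0 => j jK; exact/ltW/gm_gt0.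
Qed.

Let oneB_theta k : (k < K)%N -> 1 - theta k = S k.+1 / S k.
Proof.
move=> kK; have := S_gt0 kK; rewrite /theta /S tail_sum_recl // => S_gt0k.
by field; rewrite gt_eqF.
Qed.

Fixpoint anchor (k : nat) : vec d :=
  if k is k'.+1 then theta k' *: x k'.+1 + (1 - theta k') *: anchor k' else xs.

Let potential k := dot (x k - anchor k) (x k - anchor k) / (2 * S k) + (F (anchor k) - F xs).

Lemma dom_anchor k : (k <= K)%N -> dom (anchor k).
Proof.
elim: k => [//|k IH] kK /=.
by have [] := F_convex (dom_x kK) (IH (ltnW kK)) (theta_ge0_le1 kK).
Qed.

Lemma potential_step k : (k.+1 < K)%N ->
  potential k.+1 <= potential k + B * gm k ^+ 2 / S k.
Proof.
move=> kK; have kK' : (k < K)%N := ltnW kK.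
have domk := dom_anchor (ltnW kK').
apply: (potential_step_real (gm_gt0 kK') (tail_sum_recl gm kK') (S_gt0 kK)
  (b := dot (x k.+1 - anchor k) (x k.+1 - anchor k)) (D := F (x k.+1) - F xs)).
- have -> : x k.+1 - anchor k.+1 = (1 - theta k) *: (x k.+1 - anchor k).
    by apply/matrixP => i j; rewrite !mxE; ring.
  by rewrite dotZZ oneB_theta.
- exact: dotvv_ge0.
- have [_] := F_convex (dom_x kK') domk (theta_ge0_le1 kK').
  by rewrite [anchor k.+1]/= -/(S k) -/(theta k) -oneB_theta //; lra.
- have -> : F (x k.+1) - F xs - (F (anchor k) - F xs) = F (x k.+1) - F (anchor k) by ring.
  exact: descent.
Qed.

Lemma potential_le k : (k < K)%N ->
  potential k <= potential 0 + B * \sum_(j < k) (gm j ^+ 2 / S j).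
Proof.
elim: k => [|k IH] kK; first by rewrite big_ord0 mulr0 addr0.
apply: (le_trans (potential_step kK)).
by rewrite big_ord_recr /= mulrDr addrA mulrA lerD2r IH // ltnW.
Qed.

Theorem last_iterate_bound : (0 < K)%N ->
  F (x K) - F xs <= last_iterate_rate gm K (dot (x 0 - xs) (x 0 - xs)) B.
Proof.
move=> K_gt0; have [K' eK] : exists K', K = K'.+1 by exists K.-1; rewrite prednK.
have K'K : (K' < K)%N by rewrite eK.
have gK'_gt0 := gm_gt0 K'K.
have SK' : S K' = gm K' by rewrite /S tail_sum_recl // -eK /tail_sum big_geq // addr0.
have last_epoch : F (x K) - F (anchor K') <=
    dot (x K' - anchor K') (x K' - anchor K') / (2 * gm K') + B * gm K'.
  rewrite -(ler_pM2l gK'_gt0).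
  have := descent K'K (dom_anchor (ltnW K'K)); rewrite -eK.
  have := dotvv_ge0 (x K - anchor K').
  have -> : gm K' * (dot (x K' - anchor K') (x K' - anchor K') / (2 * gm K') + B * gm K')
    = dot (x K' - anchor K') (x K' - anchor K') / 2 + B * gm K' ^+ 2 by field; rewrite gt_eqF.
  lra.
rewrite /last_iterate_rate -/S.
have -> : \sum_(k < K) (gm k ^+ 2 / S k) = \sum_(k < K') (gm k ^+ 2 / S k) + gm K'.
  by rewrite eK big_ord_recr /= SK' expr2 mulfK // gt_eqF.
move: (potential_le K'K) last_epoch; rewrite /potential SK' /= subrr addr0 mulrDr; lra.
Qed.

End LastIterate.

Lemma favg_convex n d (f : 'I_n -> vec d -> RR) (u v : vec d) (t : RR) :
  (forall i, convex_fun (f i)) -> 0 <= t <= 1 ->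
  favg f (t *: u + (1 - t) *: v) <= t * favg f u + (1 - t) * favg f v.
Proof.
move=> f_cvx t01; rewrite /favg (mulrCA t) (mulrCA (1 - t)) -mulrDr.
rewrite ler_wpM2l ?invr_ge0 // !mulr_sumr -big_split ler_sum // => i _.
exact: f_cvx.
Qed.

Definition Freal n d (f : 'I_n -> vec d -> RR) (psi : vec d -> \bar RR) (x : vec d) : RR :=
  favg f x + fine (psi x).

Theorem prox_shuffling_last_iterate n d (f : 'I_n -> vec d -> RR)
    (g : 'I_n -> vec d -> vec d) (psi : vec d -> \bar RR) (G : 'I_n -> RR)
    (xstar x1 : vec d) (K : nat) (sigma : nat -> {perm 'I_n}) (eta : nat -> RR)
    (x : nat -> vec d) :
  (0 < n)%N ->
  (forall i, convex_fun (f i)) ->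
  (forall i x, subgrad (f i) x (g i x)) ->
  (forall i, 0 <= G i) ->
  (forall i x v, subgrad (f i) x v -> enorm v <= G i) ->
  proper_ext psi -> convex_ext psi ->
  Fobj f psi xstar \is a fin_num ->
  (0 < K)%N -> (forall k, (k < K)%N -> 0 < eta k.+1) ->
  prox_shuffling_run g psi K eta sigma x1 x ->
  (Fobj f psi (x K.+1) - Fobj f psi xstar <=
   (last_iterate_rate (fun k => n%:R * eta k.+1) K (dot (x1 - xstar) (x1 - xstar))
      (2 * ((n%:R)^-1 * \sum_(i < n) G i) ^+ 2))%:E)%E.
Proof.
move=> n_gt0 f_cvx g_subgrad G_ge0 G_bound psi_proper psi_cvx Fxs_fin K_gt0 eta_gt0 [x_1 run].
set gm := fun k => n%:R * eta k.+1; set Gbar := (n%:R)^-1 * \sum_(i < n) G i.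
have g_bounded i y : enorm (g i y) <= G i by exact/G_bound/g_subgrad.
have n_gt0R : (0 : RR) < n%:R by rewrite ltr0n.
pose dom z := exists q, psi z = q%:E.
have [qs psixs] : dom xstar.
  move: Fxs_fin; rewrite /dom /Fobj; case: (psi xstar) => [q _| |]; first by exists q.
    by rewrite addey.
  by rewrite addeNy.
have prox_k k : (k < K)%N -> is_prox n psi (eta k.+1)
    (inner_pass g (eta k.+1) (sigma k.+1) (x k.+1)) (x k.+2).
  by move=> kK; apply: run; rewrite ltnS kK.
have dom_x k : (k < K)%N -> dom (x k.+2).
  by move=> kK; apply: (is_prox_fin n_gt0 psi_proper (prox_k k kK) psixs).
have Freal_convex u v t : dom u -> dom v -> 0 <= t <= 1 ->
    dom (t *: u + (1 - t) *: v) /\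
    Freal f psi (t *: u + (1 - t) *: v) <= t * Freal f psi u + (1 - t) * Freal f psi v.
  move=> [qu psiu] [qv psiv] t01; have := psi_cvx u v t t01.
  rewrite psiu psiv -!EFinM -EFinD => /(le_EFin_real (psi_proper.1 _)) [s psis s_le].
  split; first by exists s.
  by rewrite /Freal psis psiu psiv /=; have := favg_convex u v f_cvx t01; lra.
have descent k z : (k < K)%N -> dom z ->
    gm k * (Freal f psi (x k.+2) - Freal f psi z) <=
    (dot (x k.+1 - z) (x k.+1 - z) - dot (x k.+2 - z) (x k.+2 - z)) / 2 +
    2 * Gbar ^+ 2 * gm k ^+ 2.
  move=> kK [q psiz]; have [p psix] := is_prox_fin n_gt0 psi_proper (prox_k k kK) psiz.
  have := epoch_descent n_gt0 g_subgrad g_bounded G_ge0 psi_cvx psi_proper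
    (eta_gt0 k kK) (prox_k k kK) psix psiz.
  have -> : 2 * Gbar ^+ 2 * gm k ^+ 2 = 2 * eta k.+1 ^+ 2 * (\sum_i G i) ^+ 2.
    by rewrite /Gbar /gm; field; rewrite gt_eqF.
  by rewrite /Freal psix psiz /= /gm -mulrA.
have := @last_iterate_bound d (Freal f psi) dom (fun k => x k.+1) xstar gm K
  (2 * Gbar ^+ 2) (fun k kK => mulr_gt0 n_gt0R (eta_gt0 k kK))
  Freal_convex (ex_intro _ qs psixs) dom_x descent K_gt0.
have [p psixK] : dom (x K.+1) by rewrite -(prednK K_gt0); apply: dom_x; rewrite prednK.
rewrite /= x_1 /Fobj psixK psixs -!EFinD lee_fin /Freal psixK psixs /=; lra.
Qed.

Lemma harmonic_le_1Dln (K : nat) : (0 < K)%N ->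
  \sum_(k < K) ((k.+1)%:R : RR)^-1 <= 1 + ln (K%:R : RR).
Proof.
case: K => // K _; elim: K => [|K IH]; first by rewrite big_ord1 invr1 ln1 addr0.
rewrite (big_ord_recr K.+1) /=.
suff step : ((K.+2)%:R : RR)^-1 <= ln ((K.+2)%:R : RR) - ln ((K.+1)%:R : RR).
  by apply: (le_trans (lerD IH step)); rewrite -addrA subrKC.
have := @le_ln1Dx RR (- ((K.+2)%:R)^-1).
have -> : 1 + - ((K.+2)%:R : RR)^-1 = (K.+1)%:R / (K.+2)%:R.
  rewrite -[(K.+2)%:R]natr1; field; rewrite gt_eqF //; have := ler0n RR K; lra.
rewrite ln_div ?posrE ?ltr0n // lerNr opprB; apply.
by rewrite ltrN2 invf_lt1 ?ltr0n // ltr1n.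
Qed.

Lemma sum_inv_rev (K : nat) :
  \sum_(k < K) ((K%:R - k%:R : RR))^-1 = \sum_(k < K) ((k.+1)%:R : RR)^-1.
Proof.
rewrite -(big_mkord xpredT (fun k => ((K%:R - k%:R : RR))^-1)).
rewrite -(big_mkord xpredT (fun k => ((k.+1)%:R : RR)^-1)) big_nat_rev /=.
by apply: eq_big_nat => k /andP [_ kK]; rewrite add0n -natrB ?leq_subr // subKn.
Qed.

Lemma tail_sum_ge (gm L : nat -> RR) (K : nat) :
  (forall k, (k < K)%N -> L k <= gm k + L k.+1) -> L K <= 0 ->
  forall k, (k <= K)%N -> L k <= tail_sum gm K k.
Proof.
move=> L_le LK_le0 k kK; rewrite -(subKn kK).
elim: (K - k)%N (leq_subr k K) => [|m IH] mK; first by rewrite subn0 /tail_sum big_geq.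
have mK' : (K - m.+1 < K)%N by rewrite -subn_gt0 subKn.
rewrite tail_sum_recl // (le_trans (L_le _ mK')) // lerD2l -subSn // subSS IH //.
exact: ltnW.
Qed.

Lemma last_iterate_rate_le (K : nat) (gm L : nat -> RR) (D2 B : RR) :
  (0 < K)%N -> 0 <= D2 -> 0 <= B ->
  (forall k, (k < K)%N -> 0 < L k /\ L k <= tail_sum gm K k) ->
  last_iterate_rate gm K D2 B <= D2 / (2 * L 0%N) + B * \sum_(k < K) (gm k ^+ 2 / L k).
Proof.
move=> K_gt0 D2_ge0 B_ge0 L_le.
have inv_le (a b : RR) : 0 < a -> a <= b -> b^-1 <= a^-1.
  by move=> a_gt0 ab; rewrite lef_pV2 ?posrE // (lt_le_trans a_gt0).
have [L0_gt0 L0_le] := L_le 0%N K_gt0.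
apply: lerD; first by rewrite ler_wpM2l // inv_le ?mulr_gt0 // ler_pM2l.
rewrite ler_wpM2l // ler_sum // => k _; have [Lk_gt0 Lk_le] := L_le k (ltn_ord k).
by rewrite ler_wpM2l ?sqr_ge0 // inv_le.
Qed.

Section Schedules.
Variables (K : nat) (c D2 B : RR).
Hypotheses (K_gt0 : (0 < K)%N) (c_gt0 : 0 < c) (D2_ge0 : 0 <= D2) (B_ge0 : 0 <= B).

Let sK := Num.sqrt (K%:R : RR).
Let sK_gt0 : 0 < sK. Proof. by rewrite sqrtr_gt0 ltr0n. Qed.
Let sK_sqr : sK ^+ 2 = K%:R. Proof. by rewrite sqr_sqrtr // ler0n. Qed.
Let Kk_neq0 (k : 'I_K) : (K%:R - k%:R : RR) != 0.
Proof. by rewrite subr_eq0 eqr_nat gtn_eqF. Qed.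

(* Tail sums are at least c (K - k) / sqrt K, and the resulting terms split as
   1 / ((k + 1) (K - k)) = (1 / (k + 1) + 1 / (K - k)) / (K + 1), two harmonic sums. *)
Lemma last_iterate_rate_sqrt (gm : nat -> RR) :
  (forall k, (k < K)%N -> c / sK <= gm k <= c / Num.sqrt (k.+1)%:R) ->
  last_iterate_rate gm K D2 B <= (D2 / (2 * c) + 2 * B * c * (1 + ln K%:R)) / sK.
Proof.
move=> gm_bounds; pose L k := c * (K%:R - k%:R) / sK.
have L_le k : (k < K)%N -> 0 < L k /\ L k <= tail_sum gm K k.
  move=> kK; split; first by rewrite divr_gt0 // mulr_gt0 // subr_gt0 ltr_nat.
  apply: tail_sum_ge (ltnW kK) => [j jK|]; last by rewrite /L subrr mulr0 mul0r.
  have -> : L j = c / sK + L j.+1 by rewrite /L -natr1; field; rewrite gt_eqF.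
  by rewrite lerD2r; case/andP: (gm_bounds j jK).
apply: (le_trans (last_iterate_rate_le K_gt0 D2_ge0 B_ge0 L_le)).
set H := \sum_(k < K) ((k.+1)%:R : RR)^-1.
have H_ge0 : 0 <= H by rewrite sumr_ge0 // => k _; rewrite invr_ge0.
have sum_le : \sum_(k < K) (gm k ^+ 2 / L k) <= c * sK / (K%:R + 1) * (H + H).
  rewrite {2}/H -sum_inv_rev -big_split mulr_sumr ler_sum // => k _.
  have [gk_lb gk_ub] := andP (gm_bounds k (ltn_ord k)).
  have sk1_sqr : Num.sqrt ((k.+1)%:R : RR) ^+ 2 = k%:R + 1 by rewrite sqr_sqrtr ?ler0n // natr1.
  have gk_sqr : gm k ^+ 2 <= c ^+ 2 / (k%:R + 1).
    have gk_ge0 : 0 <= gm k by rewrite (le_trans _ gk_lb) // divr_ge0 ?ltW.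
    by rewrite -sk1_sqr -expr_div_n lerXn2r ?nnegrE // divr_ge0 ?sqrtr_ge0 ?ltW.
  have Lk_inv_ge0 : 0 <= (L k)^-1 by rewrite invr_ge0 ltW //; case: (L_le k (ltn_ord k)).
  apply: (le_trans (ler_wpM2r Lk_inv_ge0 gk_sqr)).
  rewrite le_eqVlt; apply/orP; left; apply/eqP; rewrite /= /L -natr1.
  have k1_neq0 : (k%:R + 1 : RR) != 0 by rewrite natr1 pnatr_eq0.
  have K1_neq0 : (K%:R + 1 : RR) != 0 by rewrite natr1 pnatr_eq0.
  by field; rewrite Kk_neq0 k1_neq0 K1_neq0 !gt_eqF.
have ratio_le : sK / (K%:R + 1) <= sK^-1.
  have K1_gt0 : (0 : RR) < K%:R + 1 by rewrite natr1 ltr0n.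
  rewrite -subr_ge0 (_ : _ - _ = (sK * (K%:R + 1))^-1) ?invr_ge0 ?mulr_ge0 ?ltW //.
  by rewrite -sK_sqr; field; rewrite !gt_eqF // ltr_wpDl ?sqr_ge0.
have sum_le' : \sum_(k < K) (gm k ^+ 2 / L k) <= 2 * c * (1 + ln K%:R) / sK.
  apply: (le_trans sum_le).
  have -> : c * sK / (K%:R + 1) * (H + H) = 2 * c * H * (sK / (K%:R + 1)) by ring.
  have cH_ge0 : 0 <= 2 * c * H by rewrite mulr_ge0 // mulr_ge0 // ltW.
  apply: (le_trans (ler_wpM2l cH_ge0 ratio_le)).
  by rewrite ler_pM2r ?invr_gt0 // ler_pM2l ?mulr_gt0 // harmonic_le_1Dln.
have -> : D2 / (2 * L 0%N) = D2 / (2 * c) / sK by rewrite /L subr0 -sK_sqr; field; rewrite !gt_eqF.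
rewrite (mulrDl (D2 / (2 * c))); apply: lerD => //.
have -> : 2 * B * c * (1 + ln K%:R) / sK = B * (2 * c * (1 + ln K%:R) / sK) by ring.
exact: ler_wpM2l.
Qed.

Lemma last_iterate_rate_linear_decay (gm : nat -> RR) :
  (forall k, (k < K)%N -> gm k = c * (K%:R - k%:R) / (K%:R * sK)) ->
  last_iterate_rate gm K D2 B <= (D2 / c + 2 * B * c) / sK.
Proof.
move=> gm_eq; pose L k := c * (K%:R - k%:R) ^+ 2 / (2 * K%:R * sK).
have KR_gt0 : (0 : RR) < K%:R by rewrite ltr0n.
have L_le k : (k < K)%N -> 0 < L k /\ L k <= tail_sum gm K k.
  move=> kK; split; first by rewrite divr_gt0 ?mulr_gt0 ?exprn_gt0 // subr_gt0 ltr_nat.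
  apply: tail_sum_ge (ltnW kK) => [j jK|]; last by rewrite /L subrr expr0n /= mulr0 mul0r.
  have -> : gm j + L j.+1 = L j + c / (2 * K%:R * sK).
    by rewrite /L gm_eq // -natr1; field; rewrite !gt_eqF.
  by rewrite lerDl divr_ge0 ?mulr_ge0 ?ltW.
apply: (le_trans (last_iterate_rate_le K_gt0 D2_ge0 B_ge0 L_le)).
have -> : \sum_(k < K) (gm k ^+ 2 / L k) = \sum_(k < K) (2 * c / (K%:R * sK)).
  by apply: eq_bigr => k _; rewrite /L (gm_eq _ (ltn_ord k)); field; rewrite Kk_neq0 !gt_eqF.
rewrite sumr_const card_ord -[_ *+ K]mulr_natr le_eqVlt; apply/orP; left; apply/eqP.
by rewrite /L subr0 -sK_sqr; field; rewrite !gt_eqF.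
Qed.

End Schedules.

Lemma rate_sqrt_steps (n K : nat) (step : nat -> RR) (eta D2 Gb : RR) :
  (0 < n)%N -> (0 < K)%N -> 0 < eta -> 0 <= D2 ->
  (forall k, (k < K)%N ->
     eta / Num.sqrt K%:R <= step k.+1 <= eta / Num.sqrt (k.+1)%:R) ->
  last_iterate_rate (fun k => n%:R * step k.+1) K D2 (2 * Gb ^+ 2)
  <= 4 * (D2 / (n%:R * eta) + n%:R * eta * Gb ^+ 2 * (1 + ln K%:R)) / Num.sqrt K%:R.
Proof.
move=> n_gt0 K_gt0 eta_gt0 D2_ge0 step_bounds.
have c_gt0 : 0 < n%:R * eta by rewrite mulr_gt0 ?ltr0n.
have nR_neq0 : (n%:R : RR) != 0 by rewrite pnatr_eq0 -lt0n.
apply: (le_trans (last_iterate_rate_sqrt K_gt0 c_gt0 D2_ge0 _ _)).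
- by rewrite mulr_ge0 ?sqr_ge0.
- by move=> k kK; rewrite -!mulrA !ler_pM2l ?ltr0n //; exact: step_bounds.
rewrite ler_pM2r ?invr_gt0 ?sqrtr_gt0 ?ltr0n //.
set L := 1 + ln _.
have L_ge0 : 0 <= L by rewrite /L; apply: addr_ge0 => //; apply: ln_ge0; rewrite ler1n.
have -> : D2 / (2 * (n%:R * eta)) = (D2 / (n%:R * eta)) / 2 by field; rewrite nR_neq0 gt_eqF.
have : 0 <= D2 / (n%:R * eta) by rewrite divr_ge0 // ltW.
have := mulr_ge0 (mulr_ge0 (ltW c_gt0) (sqr_ge0 Gb)) L_ge0.
lra.
Qed.

Lemma rate_linear_decay_steps (n K : nat) (eta D2 Gb : RR) :
  (0 < n)%N -> (0 < K)%N -> 0 < eta -> 0 <= D2 ->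
  last_iterate_rate
    (fun k => n%:R * (eta * ((K%:R - (k.+1)%:R + 1) / (K%:R * Num.sqrt K%:R)))) K D2
    (2 * Gb ^+ 2)
  <= 4 * (D2 / (n%:R * eta) + n%:R * eta * Gb ^+ 2) / Num.sqrt K%:R.
Proof.
move=> n_gt0 K_gt0 eta_gt0 D2_ge0.
have c_gt0 : 0 < n%:R * eta by rewrite mulr_gt0 ?ltr0n.
apply: (le_trans (last_iterate_rate_linear_decay K_gt0 c_gt0 D2_ge0 _ _)).
- by rewrite mulr_ge0 ?sqr_ge0.
- by move=> k _; rewrite -natr1; ring.
rewrite ler_pM2r ?invr_gt0 ?sqrtr_gt0 ?ltr0n //.
have : 0 <= D2 / (n%:R * eta) by rewrite divr_ge0 // ltW.
have := mulr_ge0 (ltW c_gt0) (sqr_ge0 Gb).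
lra.
Qed.

Theorem theorem4p3 :
  exists C : RR, 0 < C /\
  forall (n d : nat) (f : 'I_n -> vec d -> RR) (g : 'I_n -> vec d -> vec d)
    (psi : vec d -> \bar RR) (G : 'I_n -> RR) (xstar x1 : vec d) (K : nat)
    (sigma : nat -> {perm 'I_n}),
    (0 < n)%N ->
    (forall i, convex_fun (f i)) ->
    (forall i x, subgrad (f i) x (g i x)) ->
    (forall i, 0 < G i) ->
    (forall i x v, subgrad (f i) x v -> enorm v <= G i) ->
    proper_ext psi -> closed_ext psi -> convex_ext psi ->
    (Fobj f psi xstar \is a fin_num) ->
    (forall x, (Fobj f psi xstar <= Fobj f psi x)%E) ->
    (psi x1 < +oo)%E ->
    (2 <= K)%N ->
    let D := enorm (xstar - x1) in
    let Gbar := (n%:R)^-1 * \sum_(i < n) G i in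
    forall eta : RR, 0 < eta ->
    (forall x : nat -> vec d,
      prox_shuffling_run g psi K (fun k => eta / Num.sqrt (k%:R)) sigma x1 x ->
      (Fobj f psi (x K.+1) - Fobj f psi xstar
        <= (C * (D ^+ 2 / (n%:R * eta) + n%:R * eta * Gbar ^+ 2 * (1 + ln (K%:R)))
              / Num.sqrt (K%:R))%:E)%E) /\
    (forall x : nat -> vec d,
      prox_shuffling_run g psi K (fun k => eta / Num.sqrt (K%:R)) sigma x1 x ->
      (Fobj f psi (x K.+1) - Fobj f psi xstar
        <= (C * (D ^+ 2 / (n%:R * eta) + n%:R * eta * Gbar ^+ 2 * (1 + ln (K%:R)))
              / Num.sqrt (K%:R))%:E)%E) /\
    (forall x : nat -> vec d,
      prox_shuffling_run g psi K
        (fun k => eta * ((K%:R - k%:R + 1) / (K%:R * Num.sqrt (K%:R)))) sigma x1 x ->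
      (Fobj f psi (x K.+1) - Fobj f psi xstar
        <= (C * (D ^+ 2 / (n%:R * eta) + n%:R * eta * Gbar ^+ 2)
              / Num.sqrt (K%:R))%:E)%E) /\
    (0 < D ->
     forall x : nat -> vec d,
      prox_shuffling_run g psi K
        (fun k => D / (n%:R * Gbar) * ((K%:R - k%:R + 1) / (K%:R * Num.sqrt (K%:R))))
        sigma x1 x ->
      (Fobj f psi (x K.+1) - Fobj f psi xstar
        <= (2 * C * (Gbar * D / Num.sqrt (K%:R)))%:E)%E).
Proof.
exists 4; split => // n d f g psi G xstar x1 K sigma n_gt0 f_cvx g_subgrad G_gt0 G_bound
  psi_proper _ psi_cvx Fxs_fin _ _ K_ge2 D Gbar eta eta_gt0.
have K_gt0 : (0 < K)%N by apply: leq_trans K_ge2.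
have rate_bound (step : nat -> RR) x B : (forall k, (k < K)%N -> 0 < step k.+1) ->
    prox_shuffling_run g psi K step sigma x1 x ->
    last_iterate_rate (fun k => n%:R * step k.+1) K (D ^+ 2) (2 * Gbar ^+ 2) <= B ->
    (Fobj f psi (x K.+1) - Fobj f psi xstar <= B%:E)%E.
  move=> step_gt0 run rate_le; apply: le_trans (prox_shuffling_last_iterate n_gt0 f_cvx
    g_subgrad (fun i => ltW (G_gt0 i)) G_bound psi_proper psi_cvx Fxs_fin K_gt0 step_gt0 run) _.
  by rewrite lee_fin -enorm_sqr enormBC.
have inv_sqrt_le k : (k < K)%N -> eta / Num.sqrt K%:R <= eta / Num.sqrt (k.+1)%:R.
  by move=> kK; rewrite ler_pM2l // lef_pV2 ?posrE ?sqrtr_gt0 ?ltr0n // ler_wsqrtr ?ler_nat.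
have part_iii eta' x : 0 < eta' ->
    prox_shuffling_run g psi K
      (fun k => eta' * ((K%:R - k%:R + 1) / (K%:R * Num.sqrt (K%:R)))) sigma x1 x ->
    (Fobj f psi (x K.+1) - Fobj f psi xstar
      <= (4 * (D ^+ 2 / (n%:R * eta') + n%:R * eta' * Gbar ^+ 2) / Num.sqrt (K%:R))%:E)%E.
  move=> eta'_gt0 run; apply: (rate_bound _ x _ _ run) => [k kK|].
    rewrite mulr_gt0 ?divr_gt0 ?mulr_gt0 ?sqrtr_gt0 ?ltr0n //.
    by rewrite -natr1 opprD addrA subrK subr_gt0 ltr_nat.
  by apply: rate_linear_decay_steps; rewrite ?sqr_ge0.
split; [|split; [|split]].
- move=> x run; apply: (rate_bound _ x _ _ run) => [k _|].
    by rewrite divr_gt0 // sqrtr_gt0 ltr0n.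
  apply: (@rate_sqrt_steps _ _ (fun k => eta / Num.sqrt k%:R)); rewrite ?sqr_ge0 //.
  by move=> k kK; rewrite inv_sqrt_le //=.
- move=> x run; apply: (rate_bound _ x _ _ run) => [k _|].
    by rewrite divr_gt0 // sqrtr_gt0 ltr0n.
  apply: (@rate_sqrt_steps _ _ (fun=> eta / Num.sqrt K%:R)); rewrite ?sqr_ge0 //.
  by move=> k kK; rewrite inv_sqrt_le // lexx.
- by move=> x run; apply: part_iii.
move=> D_gt0 x run; have Gbar_gt0 : 0 < Gbar.
  rewrite /Gbar mulr_gt0 ?invr_gt0 ?ltr0n // (bigD1 (Ordinal n_gt0)) //= ltr_pwDl ?G_gt0 //.
  by rewrite sumr_ge0 // => i _; exact: ltW.
apply: (le_trans (part_iii _ x _ run)); first by rewrite divr_gt0 // mulr_gt0 // ltr0n.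
have sK_gt0 : 0 < Num.sqrt (K%:R : RR) by rewrite sqrtr_gt0 ltr0n.
rewrite lee_fin le_eqVlt; apply/orP; left; apply/eqP.
by field; rewrite !gt_eqF ?ltr0n.
Qed.
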